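(* Let $R(\bar x,\bar y)$ be a definable relation, with $\bar x=(x_1,\dots,x_k)$ and $\bar y=(y_1,\dots,y_l)$. Then there is a natural number $K$ such that for every $\bar a\in\mathcal M^k$, $$\lnot(\exists_{>K}\bar y)R(\bar a,\bar y)\ \lor\ \lnot(\exists_{>K}\bar y)\lnot R(\bar a,\bar y).$$
   Context: $\mathcal M$ denotes the $\mathbb Q$-vector space $\mathbb Q^{<\omega}$ of all sequences $(v_0,v_1,\dots)$ of rationals with only finitely many nonzero terms, with zero vector $\vec 0$, regarded as the structure $\langle\mathcal M;+\rangle$. A relation on $\mathcal M$ is definable if it is first-order definable without parameters in $\langle\mathcal M;+\rangle$. The quantifier $(\exists_{>K}y)Q(y)$ means ''there are at least $K+1$ pairwise distinct $y$ with $Q(y)$''; for tuples it is defined inductively by $(\exists_{>K}y_1,\dots,y_l)Q(\bar y):=(\exists_{>K}y_1)(\exists_{>K}y_2,\dots,y_l)Q(\bar y)$. *)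

From HB Require Import structures.
From mathcomp Require Import all_boot all_order all_algebra.
Set Implicit Arguments. Unset Strict Implicit. Unset Printing Implicit Defensive.
Import Order.TTheory GRing.Theory Num.Theory.
Local Open Scope ring_scope.

(* The Q-vector space Q^{<omega} of finitely supported rational sequences,
   represented by {poly rat}: a polynomial is exactly its (finitely supported)
   sequence of coefficients (v_0, v_1, ...), and polynomial addition is
   coordinatewise addition.  Only the additive structure is used below. *)
Definition M : Type := {poly rat}.

Inductive term : Type :=
  | Tvar : nat -> term
  | Tadd : term -> term -> term.

Inductive formula : Type :=
  | Feq : term -> term -> formula
  | Fnot : formula -> formula
  | Fand : formula -> formula -> formula
  | For : formula -> formula -> formula
  | Fex : nat -> formula -> formula
  | Fall : nat -> formula -> formula.

Fixpoint teval (e : nat -> M) (t : term) : M :=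
  match t with
  | Tvar n => e n
  | Tadd t1 t2 => teval e t1 + teval e t2
  end.

Definition upd (e : nat -> M) (n : nat) (a : M) : nat -> M :=
  fun i => if i == n then a else e i.

Fixpoint holds (e : nat -> M) (f : formula) : Prop :=
  match f with
  | Feq t1 t2 => teval e t1 = teval e t2
  | Fnot g => ~ holds e g
  | Fand g h => holds e g /\ holds e h
  | For g h => holds e g \/ holds e h
  | Fex n g => exists a : M, holds (upd e n a) g
  | Fall n g => forall a : M, holds (upd e n a) g
  end.

Definition env_of (s : seq M) : nat -> M := fun i => nth 0 s i.

(* R(x_1..x_k, y_1..y_l) is definable without parameters in <M;+>:
   variables 0..k-1 stand for x, k..k+l-1 for y. *)
Definition definable (k l : nat) (R : k.-tuple M -> l.-tuple M -> Prop) : Prop :=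
  exists phi : formula, forall (a : k.-tuple M) (b : l.-tuple M),
    R a b <-> holds (env_of (a ++ b)) phi.

Definition exists_gt1 (K : nat) (Q : M -> Prop) : Prop :=
  exists s : seq M, uniq s /\ size s = K.+1 /\ forall y, y \in s -> Q y.

Fixpoint exists_gt (K l : nat) : (l.-tuple M -> Prop) -> Prop :=
  match l return (l.-tuple M -> Prop) -> Prop with
  | 0 => fun Q => Q [tuple]
  | l'.+1 => fun Q =>
      exists_gt1 K (fun y => exists_gt K (fun t : l'.-tuple M => Q (cons_tuple y t)))
  end.

From HB Require Import structures.
From mathcomp Require Import all_boot all_order all_algebra.
From Stdlib Require Import Classical FunctionalExtensionality.
Set Implicit Arguments. Unset Strict Implicit. Unset Printing Implicit Defensive.
Import GRing.Theory.
Local Open Scope ring_scope.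

(* <M;+> eliminates quantifiers down to boolean combinations of rational linear
   equations: to eliminate (exists y), solve for y each equation that involves y,
   and either substitute one of these finitely many solutions or take y outside
   all of them (a "generic" y), where every such equation fails.  Hence, for a
   quantifier-free f with n atomic equations, the set of y with f(a, y) either
   has at most n elements or contains all y but at most n: there are more than n
   witnesses iff the generic y is one.  Iterating this over y_1, ..., y_l with
   K = n, exactly one of R(a, -) and its complement has more than K witnesses,
   according to whether the fully generic tuple satisfies R(a, -). *)

Lemma exists_uniq_notin (R : nzRingType) (s : seq {poly R}) (n : nat) :
  exists t : seq {poly R}, [/\ uniq t, size t = n & {in t, forall p, p \notin s}].
Proof.
pose N := (\max_(p <- s) size p)%N.
exists [seq 'X^(N + i) | i <- iota 0 n]; split.
- rewrite map_inj_uniq ?iota_uniq // => i j /(congr1 (fun p : {poly R} => size p)).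
  by rewrite !size_polyXn => -[] /addnI.
- by rewrite size_map size_iota.
- move=> _ /mapP[i _ ->].
  apply/negP => /(leq_bigmax_seq (P := predT) (F := fun p : {poly R} => size p)).
  by rewrite size_polyXn ltnNge leq_addr => /(_ isT).
Qed.

Lemma upd_id (e : nat -> M) y b : upd e y b y = b.
Proof. by rewrite /upd eqxx. Qed.

Lemma upd_neq (e : nat -> M) y b i : i != y -> upd e y b i = e i.
Proof. by rewrite /upd => /negbTE ->. Qed.

Lemma env_of_rcons (s : seq M) b : env_of (rcons s b) = upd (env_of s) (size s) b.
Proof.
apply: functional_extensionality => i; rewrite /upd /env_of nth_rcons.
by case: ltngtP => // /ltnW lt_s_i; rewrite nth_default.
Qed.

Lemma eq_exists_gt1 K (Q Q' : M -> Prop) :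
  (forall y, Q y <-> Q' y) -> exists_gt1 K Q <-> exists_gt1 K Q'.
Proof.
by move=> eqQ; split=> -[s [uniq_s [size_s Qs]]]; exists s;
  do 2!split=> //; move=> y /Qs /eqQ.
Qed.

Lemma eq_exists_gt K l (Q Q' : l.-tuple M -> Prop) :
  (forall t, Q t <-> Q' t) -> exists_gt K Q <-> exists_gt K Q'.
Proof.
elim: l Q Q' => [|l IHl] Q Q' eqQ /=; first exact: eqQ.
by apply: eq_exists_gt1 => y; apply: IHl.
Qed.

Definition linform := seq (nat * rat).

Fixpoint lf_eval (e : nat -> M) (L : linform) : M :=
  if L is p :: L' then p.2 *: e p.1 + lf_eval e L' else 0.

Fixpoint lf_coef (y : nat) (L : linform) : rat :=
  if L is p :: L' then (if p.1 == y then p.2 else 0) + lf_coef y L' else 0.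

Definition lf_drop (y : nat) (L : linform) : linform := [seq p <- L | p.1 != y].

Definition lf_scale (a : rat) (L : linform) : linform := [seq (p.1, a * p.2) | p <- L].

Definition lf_subst (y : nat) (L' L : linform) : linform :=
  lf_drop y L ++ lf_scale (lf_coef y L) L'.

(* When [lf_coef y L != 0], the equation [L = 0] says [y = lf_solve y L]. *)
Definition lf_solve (y : nat) (L : linform) : linform :=
  lf_scale (- (lf_coef y L)^-1) (lf_drop y L).

Lemma lf_eval_cat e L1 L2 : lf_eval e (L1 ++ L2) = lf_eval e L1 + lf_eval e L2.
Proof. by elim: L1 => [|p L IHL] /=; rewrite ?add0r ?IHL ?addrA. Qed.

Lemma lf_eval_scale e a L : lf_eval e (lf_scale a L) = a *: lf_eval e L.
Proof. by elim: L => [|p L IHL] /=; rewrite ?scaler0 // IHL scalerDr scalerA. Qed.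

Lemma lf_eval_coef e y L : lf_eval e L = lf_coef y L *: e y + lf_eval e (lf_drop y L).
Proof.
elim: L => [|[i a] L IHL] /=; first by rewrite scale0r addr0.
case: eqP => [->|_] /=; rewrite IHL; first by rewrite scalerDl addrA.
by rewrite add0r addrCA.
Qed.

Lemma lf_eval_upd e y b L :
  lf_eval (upd e y b) L = lf_coef y L *: b + lf_eval e (lf_drop y L).
Proof.
rewrite (lf_eval_coef _ y) upd_id; congr (_ + _).
by elim: L => [|[i a] L IHL] //=; case: eqP => //= /eqP i_y; rewrite IHL upd_neq.
Qed.

Lemma lf_eval_upd_coef0 e y b L : lf_coef y L = 0 -> lf_eval (upd e y b) L = lf_eval e L.
Proof. by move=> coef0; rewrite lf_eval_upd (lf_eval_coef e y L) coef0 !scale0r. Qed.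

Lemma lf_eval_subst e y L' L :
  lf_eval e (lf_subst y L' L) = lf_eval (upd e y (lf_eval e L')) L.
Proof. by rewrite lf_eval_cat lf_eval_scale lf_eval_upd addrC. Qed.

Lemma lf_eval_upd_eq0 e y b L : lf_coef y L != 0 ->
  (lf_eval (upd e y b) L = 0 <-> b = lf_eval e (lf_solve y L)).
Proof.
move=> coef_neq0; rewrite lf_eval_upd lf_eval_scale scaleNr -scalerN.
split=> [/eqP | ->]; last by rewrite scalerA mulfV // scale1r addNr.
by rewrite addr_eq0 => /eqP <-; rewrite scalerA mulVf // scale1r.
Qed.

Inductive qf := QEq of linform | QNot of qf | QAnd of qf & qf | QOr of qf & qf.

Fixpoint qf_eval e (f : qf) : Prop :=
  match f with
  | QEq L => lf_eval e L = 0
  | QNot g => ~ qf_eval e g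
  | QAnd g h => qf_eval e g /\ qf_eval e h
  | QOr g h => qf_eval e g \/ qf_eval e h
  end.

Fixpoint qf_atoms (f : qf) : nat :=
  match f with
  | QEq _ => 1
  | QNot g => qf_atoms g
  | QAnd g h | QOr g h => qf_atoms g + qf_atoms h
  end.

Fixpoint qf_subst y L' f :=
  match f with
  | QEq L => QEq (lf_subst y L' L)
  | QNot g => QNot (qf_subst y L' g)
  | QAnd g h => QAnd (qf_subst y L' g) (qf_subst y L' h)
  | QOr g h => QOr (qf_subst y L' g) (qf_subst y L' h)
  end.

Fixpoint qf_roots y f : seq linform :=
  match f with
  | QEq L => if lf_coef y L == 0 then [::] else [:: lf_solve y L]
  | QNot g => qf_roots y g
  | QAnd g h | QOr g h => qf_roots y g ++ qf_roots y h
  end.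

(* [f] for [y] outside [qf_roots y f], where every atom involving [y] is false. *)
Fixpoint qf_generic y f :=
  match f with
  | QEq L => if lf_coef y L == 0 then QEq L else QNot (QEq [::])
  | QNot g => QNot (qf_generic y g)
  | QAnd g h => QAnd (qf_generic y g) (qf_generic y h)
  | QOr g h => QOr (qf_generic y g) (qf_generic y h)
  end.

Definition qf_exists y f :=
  foldr (fun L g => QOr (qf_subst y L f) g) (qf_generic y f) (qf_roots y f).

Lemma size_qf_roots y f : (size (qf_roots y f) <= qf_atoms f)%N.
Proof.
by elim: f => [L|g IHg|g IHg h IHh|g IHg h IHh] //=; rewrite ?size_cat ?leq_add //;
  case: eqP.
Qed.

Lemma qf_atoms_generic y f : qf_atoms (qf_generic y f) = qf_atoms f.
Proof.
by elim: f => [L|g IHg|g IHg h IHh|g IHg h IHh] /=; rewrite ?IHg ?IHh //; case: eqP.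
Qed.

Lemma qf_eval_subst e y L' f :
  qf_eval e (qf_subst y L' f) <-> qf_eval (upd e y (lf_eval e L')) f.
Proof.
elim: f => [L|g IHg|g IHg h IHh|g IHg h IHh] /=; rewrite ?lf_eval_subst //; tauto.
Qed.

Lemma qf_eval_generic e y b f : b \notin map (lf_eval e) (qf_roots y f) ->
  qf_eval (upd e y b) f <-> qf_eval e (qf_generic y f).
Proof.
elim: f => [L|g IHg|g IHg h IHh|g IHg h IHh] /=.
- case: eqP => [/lf_eval_upd_coef0 -> // | /eqP coef_neq0].
  rewrite inE lf_eval_upd_eq0 //= => b_notin.
  by split=> // b_eq; rewrite b_eq eqxx in b_notin.
- by move/IHg; tauto.
- by rewrite map_cat mem_cat negb_or => /andP[/IHg ? /IHh ?]; tauto.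
- by rewrite map_cat mem_cat negb_or => /andP[/IHg ? /IHh ?]; tauto.
Qed.

Lemma qf_eval_foldr_subst e y f g Ls :
  qf_eval e (foldr (fun L h => QOr (qf_subst y L f) h) g Ls) <->
  (exists2 L, L \in Ls & qf_eval e (qf_subst y L f)) \/ qf_eval e g.
Proof.
elim: Ls => [|L Ls IHLs] /=; first by split=> [g_e | [[L] | g_e]]; [right | rewrite in_nil |].
split=> [[fL | /IHLs[[L' L'_in fL'] | g_e]] | [[L' ] | g_e]].
- by left; exists L; rewrite ?mem_head.
- by left; exists L'; rewrite // inE L'_in orbT.
- by right.
- by rewrite inE => /orP[/eqP-> | L'_in fL']; [left | right; apply/IHLs; left; exists L'].
- by right; apply/IHLs; right.
Qed.

Lemma qf_eval_exists e y f : qf_eval e (qf_exists y f) <-> exists b, qf_eval (upd e y b) f.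
Proof.
rewrite /qf_exists qf_eval_foldr_subst; split.
- case=> [[L _ /qf_eval_subst fL] | generic_f]; first by exists (lf_eval e L).
  have [[|b t] [_ // _ t_notin]] := exists_uniq_notin (map (lf_eval e) (qf_roots y f)) 1.
  by exists b; apply/(qf_eval_generic (t_notin b (mem_head _ _))).
- case=> b fb.
  have [/mapP[L L_in b_eq] | b_notin] := boolP (b \in map (lf_eval e) (qf_roots y f)).
    by left; exists L; rewrite // qf_eval_subst -b_eq.
  by right; apply/(qf_eval_generic b_notin).
Qed.

Fixpoint term_lf (t : term) : linform :=
  match t with Tvar n => [:: (n, 1)] | Tadd t1 t2 => term_lf t1 ++ term_lf t2 end.

Lemma teval_lf e t : teval e t = lf_eval e (term_lf t).
Proof.
by elim: t => [n|t1 IH1 t2 IH2] /=; rewrite ?lf_eval_cat -?IH1 -?IH2 // scale1r addr0.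
Qed.

Lemma quantifier_elimination (phi : formula) :
  exists f : qf, forall e, holds e phi <-> qf_eval e f.
Proof.
elim: phi => [t1 t2|g [f Hf]|g [f Hf] h [f' Hf']|g [f Hf] h [f' Hf']|n g [f Hf]|n g [f Hf]].
- exists (QEq (term_lf t1 ++ lf_scale (-1) (term_lf t2))) => e /=.
  rewrite lf_eval_cat lf_eval_scale scaleN1r !teval_lf.
  by split=> [->|/eqP]; rewrite ?subrr // subr_eq0 => /eqP.
- by exists (QNot f) => e /=; rewrite Hf.
- by exists (QAnd f f') => e /=; rewrite Hf Hf'.
- by exists (QOr f f') => e /=; rewrite Hf Hf'.
- exists (qf_exists n f) => e /=; rewrite qf_eval_exists.
  by split=> -[a fa]; exists a; apply/Hf.
- exists (QNot (qf_exists n (QNot f))) => e /=; rewrite qf_eval_exists /=.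
  split=> [all_f [a]|no_cex a]; first by rewrite -Hf.
  by apply/Hf; apply: NNPP => not_f; apply: no_cex; exists a.
Qed.

Lemma exists_gt1_qf_generic K e y f : (qf_atoms f <= K)%N ->
  exists_gt1 K (fun b => qf_eval (upd e y b) f) <-> qf_eval e (qf_generic y f).
Proof.
move=> atoms_le_K; set roots := map (lf_eval e) (qf_roots y f).
have size_roots : (size roots <= K)%N by rewrite size_map (leq_trans (size_qf_roots y f)).
split=> [[s [uniq_s [size_s f_s]]] | generic_f].
- apply: NNPP => not_generic.
  have s_roots : {subset s <= roots}.
    move=> b b_in; apply: contraT => b_notin.
    by case: not_generic; apply/(qf_eval_generic b_notin)/f_s.
  by have := leq_trans (uniq_leq_size uniq_s s_roots) size_roots; rewrite size_s ltnn.
- have [t [uniq_t size_t t_notin]] := exists_uniq_notin roots K.+1.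
  by exists t; do 2!split=> //; move=> b /t_notin/qf_eval_generic ->.
Qed.

Definition qf_generic_seq (ys : seq nat) (f : qf) : qf := foldr qf_generic f ys.

Lemma qf_atoms_generic_seq ys f : qf_atoms (qf_generic_seq ys f) = qf_atoms f.
Proof. by elim: ys => //= y ys <-; rewrite qf_atoms_generic. Qed.

Lemma qf_generic_seq_not ys f : qf_generic_seq ys (QNot f) = QNot (qf_generic_seq ys f).
Proof. by elim: ys => //= y ys ->. Qed.

Lemma exists_gt_qf_generic K l f (s : seq M) : (qf_atoms f <= K)%N ->
  exists_gt K (fun b : l.-tuple M => qf_eval (env_of (s ++ b)) f) <->
  qf_eval (env_of s) (qf_generic_seq (iota (size s) l) f).
Proof.
move=> atoms_le_K; elim: l s => [|l IHl] s /=; first by rewrite cats0.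
have atoms_le_K' : (qf_atoms (qf_generic_seq (iota (size s).+1 l) f) <= K)%N.
  by rewrite qf_atoms_generic_seq.
apply: iff_trans (exists_gt1_qf_generic (env_of s) (size s) atoms_le_K').
apply: eq_exists_gt1 => b; rewrite -env_of_rcons -(size_rcons s b).
by apply: iff_trans (IHl _); apply: eq_exists_gt => t; rewrite /= cat_rcons.
Qed.

Theorem mainTheorem1 (k l : nat) (R : k.-tuple M -> l.-tuple M -> Prop) :
  definable R ->
  exists K : nat, forall a : k.-tuple M,
    ~ exists_gt K (R a) \/ ~ exists_gt K (fun b => ~ R a b).
Proof.
case=> phi def_R; have [f Hf] := quantifier_elimination phi.
exists (qf_atoms f) => a.
have R_qf b : R a b <-> qf_eval (env_of (a ++ b)) f := iff_trans (def_R a b) (Hf _).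
pose generic := qf_eval (env_of a) (qf_generic_seq (iota (size a) l) f).
have many_R : exists_gt (qf_atoms f) (R a) <-> generic.
  apply: iff_trans (exists_gt_qf_generic l a (leqnn _)).
  exact: eq_exists_gt.
have many_not_R : exists_gt (qf_atoms f) (fun b => ~ R a b) <-> ~ generic.
  have := exists_gt_qf_generic (K := qf_atoms f) (f := QNot f) l a (leqnn _).
  rewrite qf_generic_seq_not; apply: iff_trans; apply: eq_exists_gt => b /=.
  by have := R_qf b; tauto.
by have [generic_a | not_generic_a] := classic generic; [right | left]; tauto.
Qed.
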